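(* Let $\ell\ge 1$ and $w\ge 0$ be integers, and let $A=\langle A_1,\dots,A_\ell\rangle$ and $B=\langle B_1,\dots,B_\ell\rangle$ be real sequences. Let $i,j\in\{1,\dots,\ell\}$ with $i-w\le j\le i+w$, so that $(i,j)$ is an alignment permitted by the window $w$. If $B_j<\mathbb{L}^{\Omega}_j$, then either $A_i>\mathbb{U}^B_i\ge B_j$ or $\mathbb{U}^B_i\ge A_i\ge B_j\ge \mathbb{L}^B_i$.
   Context: For a real sequence $S=\langle S_1,\dots,S_\ell\rangle$ and window $w$, the upper and lower envelopes are the sequences $\mathbb{U}^S_i=\max_{\max(1,i-w)\le j\le \min(\ell,i+w)} S_j$ and $\mathbb{L}^S_i=\min_{\max(1,i-w)\le j\le \min(\ell,i+w)} S_j$ for $1\le i\le\ell$. The projection $\Omega=\Omega_w(A,B)$ of $A$ onto $B$ is the sequence with $\Omega_i=\mathbb{U}^B_i$ if $A_i>\mathbb{U}^B_i$, $\Omega_i=\mathbb{L}^B_i$ if $A_i<\mathbb{L}^B_i$, and $\Omega_i=A_i$ otherwise. $\mathbb{U}^{\Omega}$ and $\mathbb{L}^{\Omega}$ denote the upper and lower envelopes (with the same window $w$) of $\Omega$. *)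

(* real sequences of length l are functions nat -> R, indexed 1..l
   (values outside 1..l are ignored). *)
From Stdlib Require Import Reals List Lia.
Open Scope R_scope.

Definition win_lo (w i : nat) : nat := Nat.max 1 (i - w).
Definition win_hi (l w i : nat) : nat := Nat.min l (i + w).

Definition win_vals (X : nat -> R) (l w i : nat) : list R :=
  map X (seq (win_lo w i) (Nat.succ (win_hi l w i) - win_lo w i)%nat).

Definition upper_env (X : nat -> R) (l w i : nat) : R :=
  fold_right Rmax (X (win_lo w i)) (win_vals X l w i).

Definition lower_env (X : nat -> R) (l w i : nat) : R :=
  fold_right Rmin (X (win_lo w i)) (win_vals X l w i).

Definition projection (A B : nat -> R) (l w : nat) (i : nat) : R :=
  if Rlt_dec (upper_env B l w i) (A i) then upper_env B l w i
  else if Rlt_dec (A i) (lower_env B l w i) then lower_env B l w i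
  else A i.

(* The window relation is symmetric, so i lies in the window of j and j in the
   window of i.  Hence B_j < L^Ω_j <= Ω_i and L^B_i <= B_j <= U^B_i.  If Ω_i
   were the clamp L^B_i we would get L^B_i <= B_j < L^B_i; so either A_i > U^B_i,
   or Ω_i = A_i and then A_i > B_j. *)
From Stdlib Require Import Reals Lra Lia List.
Open Scope R_scope.

Lemma fold_right_Rmin_le (a x : R) (s : list R) :
  In x s -> fold_right Rmin a s <= x.
Proof.
  induction s as [|y s IH]; simpl; [tauto|].
  intros [<-|Hx]; [apply Rmin_l|].
  pose proof (Rmin_r y (fold_right Rmin a s)); specialize (IH Hx); lra.
Qed.

Lemma fold_right_Rmax_ge (a x : R) (s : list R) :
  In x s -> x <= fold_right Rmax a s.
Proof.
  induction s as [|y s IH]; simpl; [tauto|].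
  intros [<-|Hx]; [apply Rmax_l|].
  pose proof (Rmax_r y (fold_right Rmax a s)); specialize (IH Hx); lra.
Qed.

Section Window.

Variables (l w : nat).

Definition in_window (i k : nat) : Prop :=
  (win_lo w i <= k <= win_hi l w i)%nat.

Lemma in_window_of_close (i k : nat) :
  (1 <= k <= l)%nat -> (k <= i + w)%nat -> (i <= k + w)%nat -> in_window i k.
Proof. unfold in_window, win_lo, win_hi; lia. Qed.

Lemma In_win_vals (X : nat -> R) (i k : nat) :
  in_window i k -> In (X k) (win_vals X l w i).
Proof.
  intros Hk; apply in_map, in_seq; unfold in_window, Nat.succ in *; lia.
Qed.

Lemma lower_env_le (X : nat -> R) (i k : nat) :
  in_window i k -> lower_env X l w i <= X k.
Proof. intros Hk; apply fold_right_Rmin_le, In_win_vals, Hk. Qed.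

Lemma upper_env_ge (X : nat -> R) (i k : nat) :
  in_window i k -> X k <= upper_env X l w i.
Proof. intros Hk; apply fold_right_Rmax_ge, In_win_vals, Hk. Qed.

Variables (A B : nat -> R).

Lemma projection_below (i : nat) :
  A i <= upper_env B l w i -> A i < lower_env B l w i ->
  projection A B l w i = lower_env B l w i.
Proof.
  intros HU HL; unfold projection.
  destruct (Rlt_dec (upper_env B l w i) (A i)); [lra|].
  destruct (Rlt_dec (A i) (lower_env B l w i)); [reflexivity | contradiction].
Qed.

Lemma projection_between (i : nat) :
  A i <= upper_env B l w i -> lower_env B l w i <= A i ->
  projection A B l w i = A i.
Proof.
  intros HU HL; unfold projection.
  destruct (Rlt_dec (upper_env B l w i) (A i)); [lra|].
  destruct (Rlt_dec (A i) (lower_env B l w i)); [lra | reflexivity].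
Qed.

End Window.

Theorem mainTheorem2 (l w : nat) (A B : nat -> R) (i j : nat) :
  (1 <= l)%nat ->
  (1 <= i <= l)%nat -> (1 <= j <= l)%nat ->
  (i <= j + w)%nat -> (j <= i + w)%nat ->
  B j < lower_env (projection A B l w) l w j ->
  (A i > upper_env B l w i /\ upper_env B l w i >= B j) \/
  (upper_env B l w i >= A i /\ A i >= B j /\ B j >= lower_env B l w i).
Proof.
  intros _ Hi Hj Hij Hji HBj.
  assert (Omega_i : B j < projection A B l w i).
  { pose proof (lower_env_le l w (projection A B l w) j i
                  (in_window_of_close l w j i Hi Hij Hji)); lra. }
  pose proof (in_window_of_close l w i j Hj Hji Hij) as Wj.
  pose proof (lower_env_le l w B i j Wj) as LB.
  pose proof (upper_env_ge l w B i j Wj) as UB.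
  destruct (Rlt_le_dec (upper_env B l w i) (A i)) as [HU|HU]; [left; lra|].
  destruct (Rlt_le_dec (A i) (lower_env B l w i)) as [HL|HL].
  - rewrite (projection_below l w A B i HU HL) in Omega_i; lra.
  - rewrite (projection_between l w A B i HU HL) in Omega_i; right; lra.
Qed.
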